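(* Let $\mathcal{A}$ be a unital commutative C*-algebra and $d,n\in\mathbb{N}$. Let $\{\tau_j\}_{j=1}^n$ and $\{\omega_j\}_{j=1}^n$ be two Parseval frames for the Hilbert C*-module $\mathcal{A}^d$, and let $\varepsilon>0$. If \[ \left\|\sum_{j=1}^{n}\langle \tau_j-\omega_j, \tau_j-\omega_j\rangle \right\|<\varepsilon, \] then \[ \left\|\sum_{j=1}^{n}\langle \theta_\tau\tau_j-\theta_\omega\omega_j, \theta_\tau\tau_j-\theta_\omega \omega_j\rangle \right\|<4\varepsilon, \] where the inner product on the left is that of $\mathcal{A}^n$.
   Context: For a unital C*-algebra $\mathcal{A}$ and $m\in\mathbb{N}$, $\mathcal{A}^m$ is the left $\mathcal{A}$-module with the natural operations and $\mathcal{A}$-valued inner product $\langle (x_j)_{j=1}^m,(y_j)_{j=1}^m\rangle=\sum_{j=1}^m x_jy_j^*$, with norm $\|x\|=\|\langle x,x\rangle\|^{1/2}$; $\{e_k\}$ denotes its standard orthonormal basis. A collection $\{\tau_j\}_{j=1}^n$ in $\mathcal{A}^d$ is a Parseval frame for $\mathcal{A}^d$ if $\langle x,x\rangle=\sum_{j=1}^n\langle x,\tau_j\rangle\langle\tau_j,x\rangle$ for all $x\in\mathcal{A}^d$. Its analysis homomorphism is $\theta_\tau:\mathcal{A}^d\to\mathcal{A}^n$, $\theta_\tau x=(\langle x,\tau_j\rangle)_{j=1}^n$; similarly for $\theta_\omega$. *)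

From mathcomp Require Import all_boot all_algebra complex reals.
Set Implicit Arguments. Unset Strict Implicit. Unset Printing Implicit Defensive.
Import GRing.Theory Num.Theory.
Local Open Scope ring_scope.
Local Open Scope complex_scope.

Record is_comm_cstar (R : realType) (A : comAlgType R[i])
    (star : A -> A) (nrm : A -> R) : Prop := {
  cs_nrm_ge0 : forall x, 0 <= nrm x;
  cs_nrm_eq0 : forall x, nrm x = 0 -> x = 0;
  cs_nrm_triangle : forall x y, nrm (x + y) <= nrm x + nrm y;
  cs_nrm_scale : forall (c : R[i]) x, (nrm (c *: x))%:C = `|c| * (nrm x)%:C;
  cs_nrm_submult : forall x y, nrm (x * y) <= nrm x * nrm y;
  cs_complete : forall u : nat -> A,
      (forall e : R, 0 < e -> exists N, forall m k, (N <= m)%N -> (N <= k)%N ->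
          nrm (u m - u k) < e) ->
      exists l : A, forall e : R, 0 < e -> exists N, forall m, (N <= m)%N ->
          nrm (u m - l) < e;
  cs_star_add : forall x y, star (x + y) = star x + star y;
  cs_star_scale : forall (c : R[i]) x, star (c *: x) = (Num.conj c) *: star x;
  cs_star_mul : forall x y, star (x * y) = star y * star x;
  cs_star_invol : forall x, star (star x) = x;
  cs_cstar_id : forall x, nrm (star x * x) = nrm x ^+ 2
}.

Definition cip (R : realType) (A : comAlgType R[i]) (star : A -> A) (m : nat)
    (x y : 'rV[A]_m) : A :=
  \sum_(k < m) x ord0 k * star (y ord0 k).

Definition parseval (R : realType) (A : comAlgType R[i]) (star : A -> A)
    (d n : nat) (tau : 'I_n -> 'rV[A]_d) : Prop :=
  forall x : 'rV[A]_d,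
    cip star x x = \sum_(j < n) cip star x (tau j) * cip star (tau j) x.

Definition analysis_op (R : realType) (A : comAlgType R[i]) (star : A -> A)
    (d n : nat) (tau : 'I_n -> 'rV[A]_d) (x : 'rV[A]_d) : 'rV[A]_n :=
  \row_(j < n) cip star x (tau j).

(* Write y_jk := <tau_j - omega_j, tau_k> and z_jk := <omega_j, tau_k - omega_k>.
   The (j,k) entry of theta_tau tau_j - theta_omega omega_j is y_jk + z_jk, and the
   Parseval identities give sum y y^* = sum z z^* = H, where
   H := sum_j <tau_j - omega_j, tau_j - omega_j>.  By the parallelogram law
   sum (y + z)(y + z)^* + sum (y - z)(y - z)^* = 4H with both sums positive, and
   the norm of a C*-algebra is monotone on positive elements, so the first sum
   has norm at most 4 |H|.

   Positivity is handled without Gelfand theory.  Square roots of 1 - u, for u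
   hermitian with |u| < 1, are limits of the iteration w |-> (u + w^2)/2.
   Monotonicity reduces, through such square roots, to |h|^2 <= |h^2 + k^2| for
   hermitian h and k, which follows from (h + ik)(h + ik)^* = h^2 + k^2,
   2h = (h + ik) + (h + ik)^* and the C*-identity. *)

From mathcomp Require Import all_boot all_order all_algebra complex reals.
From mathcomp Require Import topology normedtype sequences.
From mathcomp Require Import ring lra.
Import Order.TTheory GRing.Theory Num.Theory numFieldNormedType.Exports.
Set Implicit Arguments.
Unset Strict Implicit.
Unset Printing Implicit Defensive.

Local Open Scope ring_scope.
Local Open Scope complex_scope.

Lemma exists_expr_lt (R : archiRealFieldType) (q e : R) :
  0 <= q -> q < 1 -> 0 < e -> exists N : nat, q ^+ N < e.
Proof.
move=> q_ge0 q_lt1 e_gt0; have normq_lt1 : `|q| < 1 by rewrite ger0_norm.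
have [N _ qN_lt] := cvgr_dist_lt _ _ (cvg_geometric 1 normq_lt1) _ e_gt0.
exists N; have := qN_lt N (leqnn N).
by rewrite /= sub0r normrN /geometric /= mul1r ger0_norm // exprn_ge0.
Qed.

Lemma le0_mul_eps (R : realFieldType) (a C : R) :
  0 <= C -> (forall e, 0 < e -> a <= C * e) -> a <= 0.
Proof.
move=> C_ge0 aC; apply/ler_addgt0Pr => e e_gt0; rewrite add0r.
have C1_gt0 : 0 < C + 1 by rewrite ltr_wpDl.
apply: le_trans (aC _ (divr_gt0 e_gt0 C1_gt0)) _.
by rewrite mulrCA ger_pMr ?ler_pdivrMr ?mul1r ?lerDl.
Qed.

Section CStarAlgebra.
Variables (R : realType) (A : comAlgType R[i]) (star : A -> A) (nrm : A -> R).
Hypothesis HA : is_comm_cstar star nrm.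

Definition hermitian (x : A) := star x = x.

Definition half (x : A) : A := (2^-1 : R)%:C *: x.

Lemma starD x y : star (x + y) = star x + star y.
Proof. exact: (cs_star_add HA). Qed.

Lemma starK x : star (star x) = x.
Proof. exact: (cs_star_invol HA). Qed.

Lemma starM x y : star (x * y) = star x * star y.
Proof. by rewrite (cs_star_mul HA) mulrC. Qed.

Lemma star0 : star 0 = 0.
Proof. by apply: (addrI (star 0)); rewrite -starD !addr0. Qed.

Lemma starN x : star (- x) = - star x.
Proof. by apply/eqP; rewrite -addr_eq0 -starD addNr star0. Qed.

Lemma starB x y : star (x - y) = star x - star y.
Proof. by rewrite starD starN. Qed.

Lemma star_sum (I : Type) (r : seq I) (P : pred I) (F : I -> A) :
  star (\sum_(i <- r | P i) F i) = \sum_(i <- r | P i) star (F i).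
Proof. exact: (big_morph star starD star0). Qed.

Lemma star1 : star 1 = 1.
Proof. by have := starM 1 (star 1); rewrite mul1r starK mulr1 => <-. Qed.

Lemma star_realZ (r : R) x : star (r%:C *: x) = r%:C *: star x.
Proof. by rewrite (cs_star_scale HA); congr (_ *: _); rewrite /Num.conj /= oppr0. Qed.

Lemma star_iZ x : star ('i *: x) = - ('i *: star x).
Proof. by rewrite (cs_star_scale HA) conjCi scaleNr. Qed.

Lemma star_half x : star (half x) = half (star x).
Proof. exact: star_realZ. Qed.

Lemma nrm_ge0 x : 0 <= nrm x.
Proof. exact: (cs_nrm_ge0 HA). Qed.

Lemma nrmD x y : nrm (x + y) <= nrm x + nrm y.
Proof. exact: (cs_nrm_triangle HA). Qed.

Lemma nrmM x y : nrm (x * y) <= nrm x * nrm y.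
Proof. exact: (cs_nrm_submult HA). Qed.

Lemma nrm_realZ (r : R) x : nrm (r%:C *: x) = `|r| * nrm x.
Proof.
have normC_real : `|r%:C| = `|r|%:C.
  by rewrite normc_def /= expr0n /= addr0 sqrtr_sqr.
by apply: complexI; rewrite (cs_nrm_scale HA) normC_real rmorphM.
Qed.

Lemma nrm_iZ x : nrm ('i *: x) = nrm x.
Proof. by apply: complexI; rewrite (cs_nrm_scale HA) normCi mul1r. Qed.

Lemma nrm0 : nrm 0 = 0.
Proof. by rewrite -(scale0r 0) -[0 : R[i]]/((0 : R)%:C) nrm_realZ normr0 mul0r. Qed.

Lemma nrmN x : nrm (- x) = nrm x.
Proof. by rewrite -scaleN1r -(rmorphN1 (@real_complex R)) nrm_realZ normrN1 mul1r. Qed.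

Lemma nrmB x y : nrm (x - y) <= nrm x + nrm y.
Proof. by rewrite -(nrmN y) nrmD. Qed.

Lemma nrm_half x : nrm (half x) = nrm x / 2.
Proof. by rewrite nrm_realZ ger0_norm ?invr_ge0 ?ler0n // mulrC. Qed.

Lemma half_twice x : half x + half x = x.
Proof.
rewrite -scalerDl -rmorphD.
have -> : (2^-1 + 2^-1 : R) = 1 by field.
by rewrite rmorph1 scale1r.
Qed.

Lemma halfB x y : half x - half y = half (x - y).
Proof. by rewrite /half scalerBr. Qed.

Lemma half_double x : half (x + x) = x.
Proof. by rewrite /half scalerDr half_twice. Qed.

Lemma nrm_star x : nrm (star x) = nrm x.
Proof.
have nrm_le_star y : nrm y <= nrm (star y).
  have := nrmM (star y) y; rewrite (cs_cstar_id HA) expr2.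
  have [->|y_neq0] := eqVneq (nrm y) 0; first by rewrite nrm_ge0.
  by rewrite ler_pM2r // lt_def y_neq0 nrm_ge0.
by apply/eqP; rewrite eq_le nrm_le_star -{2}(starK x) nrm_le_star.
Qed.

Lemma nrm_mul_star x : nrm (x * star x) = nrm x ^+ 2.
Proof. by rewrite mulrC (cs_cstar_id HA). Qed.

Lemma nrm_sqr_herm h : hermitian h -> nrm (h * h) = nrm h ^+ 2.
Proof. by move=> hh; rewrite -{2}hh nrm_mul_star. Qed.

Lemma nrm1 : nrm 1 = 1.
Proof.
have /eqP := nrm_mul_star 1; rewrite star1 mulr1 expr2 -subr_eq0.
rewrite -{1}(mulr1 (nrm 1)) -mulrBr mulf_eq0 subr_eq0 => /orP[/eqP/(cs_nrm_eq0 HA)|].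
  by move/eqP; rewrite oner_eq0.
by rewrite eq_sym => /eqP.
Qed.

Lemma nrm_real1 (r : R) : 0 <= r -> nrm (r%:C *: 1) = r.
Proof. by move=> r_ge0; rewrite nrm_realZ nrm1 mulr1 ger0_norm. Qed.

Lemma nrm_sub_le_eps_eq x y (C : R) : 0 <= C ->
  (forall e, 0 < e -> nrm (x - y) <= C * e) -> x = y.
Proof.
move=> C_ge0 small; apply/eqP; rewrite -subr_eq0; apply/eqP/(cs_nrm_eq0 HA).
by apply/eqP; rewrite eq_le nrm_ge0 andbT (le0_mul_eps C_ge0 small).
Qed.

Lemma mul_cartesian_conj (h k : A) :
  (h + ('i : R[i]) *: k) * (h - ('i : R[i]) *: k) = h * h + k * k.
Proof.
rewrite mulrDl !mulrBr -!scalerAl -!scalerAr scalerA mulCii scaleN1r [k * h]mulrC.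
by rewrite opprK addrA subrK.
Qed.

Lemma star_cartesian (h k : A) : hermitian h -> hermitian k ->
  star (h + ('i : R[i]) *: k) = h - ('i : R[i]) *: k.
Proof. by move=> hh hk; rewrite starD star_iZ hh hk. Qed.

Lemma nrm_re_le (h k : A) : hermitian h -> hermitian k ->
  nrm h <= nrm (h + ('i : R[i]) *: k).
Proof.
move=> hh hk; set z := h + 'i *: k.
have <- : half (z + star z) = h.
  by rewrite star_cartesian // addrACA subrr addr0 half_double.
by rewrite nrm_half ler_pdivrMr // mulr2n mulrDr mulr1 (le_trans (nrmD _ _)) ?nrm_star.
Qed.

Lemma nrm_im_le (h k : A) : hermitian h -> hermitian k ->
  nrm k <= nrm (h + ('i : R[i]) *: k).
Proof.
move=> hh hk.
have <- : nrm (k + 'i *: (- h)) = nrm (h + 'i *: k).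
  rewrite -[RHS]nrm_iZ -[RHS]nrmN scalerDr scalerA mulCii scaleN1r.
  by rewrite opprD opprK scalerN addrC.
by apply: nrm_re_le; rewrite // /hermitian starN hh.
Qed.

Lemma cartesian_decomposition (z : A) :
  exists h k, [/\ hermitian h, hermitian k & z = h + ('i : R[i]) *: k].
Proof.
exists (half (z + star z)), (- ('i *: half (z - star z))); split.
- by rewrite /hermitian star_half starD starK addrC.
- rewrite /hermitian starN star_iZ opprK star_half starB starK.
  by rewrite -[star z - z]opprB /half !scalerN.
- rewrite scalerN scalerA mulCii scaleN1r opprK /half -scalerDr.
  by rewrite addrACA subrr addr0; exact: (esym (half_double z)).
Qed.

Lemma nrm_sqr_le_add_sqr (h k : A) : hermitian h -> hermitian k ->
  nrm (h * h) <= nrm (h * h + k * k).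
Proof.
move=> hh hk; rewrite -mul_cartesian_conj -star_cartesian // nrm_mul_star.
by rewrite nrm_sqr_herm // lerXn2r ?nnegrE ?nrm_ge0 ?nrm_re_le.
Qed.

Definition hermitian_square (a : A) := exists w, hermitian w /\ w * w = a.

Definition nrm_cauchy (y : nat -> A) := forall e : R, 0 < e ->
  exists N, forall m k, (N <= m)%N -> (N <= k)%N -> nrm (y m - y k) < e.

Definition nrm_cvg (y : nat -> A) (l : A) := forall e : R, 0 < e ->
  exists N, forall m, (N <= m)%N -> nrm (y m - l) < e.

Lemma nrm_telescope_le (y : nat -> A) (q : R) : q < 1 ->
    (forall k, nrm (y k.+1 - y k) <= q ^+ k) ->
  forall k j, (1 - q) * nrm (y (k + j)%N - y k) <= q ^+ k - q ^+ (k + j).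
Proof.
move=> q_lt1 step k; elim=> [|j IH]; first by rewrite addn0 !subrr nrm0 mulr0.
have := nrmD (y (k + j).+1 - y (k + j)%N) (y (k + j)%N - y k).
rewrite addrA subrK addnS exprS.
have := step (k + j)%N; have : 0 < 1 - q by rewrite subr_gt0.
nra.
Qed.

Lemma nrm_cauchy_geometric (y : nat -> A) (q : R) : 0 <= q -> q < 1 ->
  (forall k, nrm (y k.+1 - y k) <= q ^+ k) -> nrm_cauchy y.
Proof.
move=> q_ge0 q_lt1 step e e_gt0.
have q1_gt0 : 0 < 1 - q by rewrite subr_gt0.
have e2_gt0 : 0 < e / 2 by rewrite divr_gt0.
have [N qN_lt] := exists_expr_lt q_ge0 q_lt1 (mulr_gt0 q1_gt0 e2_gt0).
have near_N j : nrm (y (N + j)%N - y N) < e / 2.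
  rewrite -(ltr_pM2l q1_gt0).
  have := nrm_telescope_le q_lt1 step N j; have := exprn_ge0 (N + j) q_ge0.
  lra.
exists N => m k N_le_m N_le_k.
have -> : y m - y k = (y (N + (m - N))%N - y N) - (y (N + (k - N))%N - y N).
  by rewrite !subnKC // opprB addrA subrK.
have := nrmB (y (N + (m - N))%N - y N) (y (N + (k - N))%N - y N).
have := near_N (m - N)%N; have := near_N (k - N)%N.
lra.
Qed.

Lemma nrm_cvg_herm (y : nat -> A) l :
  (forall k, hermitian (y k)) -> nrm_cvg y l -> hermitian l.
Proof.
move=> y_herm y_l; apply: (@nrm_sub_le_eps_eq _ _ 2) => // e e_gt0.
have [N yN_l] := y_l e e_gt0.
have -> : star l - l = star (l - y N) + (y N - l) by rewrite starB y_herm addrA subrK.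
apply: le_trans (nrmD _ _) _; rewrite nrm_star -nrmN opprB.
by have := yN_l N (leqnn N); lra.
Qed.

Section SquareRoot.
Variable u : A.
Hypotheses (u_herm : hermitian u) (u_lt1 : nrm u < 1).

(* The limit l of this iteration solves l = (u + l^2)/2, i.e. (1 - l)^2 = 1 - u;
   the map is a contraction on the ball of radius nrm u < 1. *)
Fixpoint sqrt_seq k :=
  if k is k'.+1 then half (u + sqrt_seq k' * sqrt_seq k') else 0.

Lemma sqrt_seqS k : sqrt_seq k.+1 = half (u + sqrt_seq k * sqrt_seq k).
Proof. by []. Qed.

Lemma sqrt_seq_herm k : hermitian (sqrt_seq k).
Proof.
elim: k => [|k IH]; first exact: star0.
by rewrite /hermitian sqrt_seqS star_half starD starM IH u_herm.
Qed.

Lemma sqrt_seq_le k : nrm (sqrt_seq k) <= nrm u.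
Proof.
elim: k => [|k IH]; first by rewrite nrm0 nrm_ge0.
rewrite sqrt_seqS nrm_half.
have := ler_pM (nrm_ge0 _) (nrm_ge0 _) IH IH.
have := ler_piMl (nrm_ge0 u) (ltW u_lt1).
have := nrmD u (sqrt_seq k * sqrt_seq k); have := nrmM (sqrt_seq k) (sqrt_seq k).
lra.
Qed.

Lemma sqrt_seq_step k : nrm (sqrt_seq k.+1 - sqrt_seq k) <= nrm u ^+ k.+1.
Proof.
elim: k => [|k IH].
  rewrite sqrt_seqS mulr0 addr0 subr0 nrm_half expr1 ler_pdivrMr //.
  by rewrite ler_peMr ?nrm_ge0 ?ler1n.
rewrite (sqrt_seqS k.+1) [in X in _ - X]sqrt_seqS halfB.
set y := sqrt_seq.
have -> : u + y k.+1 * y k.+1 - (u + y k * y k) = (y k.+1 + y k) * (y k.+1 - y k).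
  by ring.
have sum_le : nrm (y k.+1 + y k) <= nrm u + nrm u.
  by apply: le_trans (nrmD _ _) _; rewrite lerD ?sqrt_seq_le.
have prod_le := ler_pM (nrm_ge0 _) (nrm_ge0 _) sum_le IH.
rewrite nrm_half exprS.
by have := nrmM (y k.+1 + y k) (y k.+1 - y k); lra.
Qed.

Lemma sqrt_seq_cauchy : nrm_cauchy sqrt_seq.
Proof.
apply: (nrm_cauchy_geometric (nrm_ge0 u) u_lt1) => k.
apply: le_trans (sqrt_seq_step k) _.
by rewrite exprS ler_piMl ?exprn_ge0 ?nrm_ge0 // ltW.
Qed.

Lemma sqrt_seq_lim_fix l : nrm_cvg sqrt_seq l -> l = half (u + l * l).
Proof.
move=> y_l; set C := 1 + (nrm u + nrm l) / 2.
have C_ge0 : 0 <= C by rewrite addr_ge0 // divr_ge0 // addr_ge0 // nrm_ge0.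
apply: (@nrm_sub_le_eps_eq _ _ C) => // e e_gt0; have [N yN_l] := y_l e e_gt0.
set y := sqrt_seq.
have -> : l - half (u + l * l) = - (y N.+1 - l) + (y N.+1 - half (u + l * l)).
  by ring.
have -> : y N.+1 - half (u + l * l) = half ((y N + l) * (y N - l)).
  by rewrite /y sqrt_seqS halfB; congr half; ring.
have sum_le : nrm (y N + l) <= nrm u + nrm l.
  by apply: le_trans (nrmD _ _) _; rewrite lerD ?sqrt_seq_le.
have prod_le := ler_pM (nrm_ge0 _) (nrm_ge0 _) sum_le (ltW (yN_l N (leqnn N))).
apply: le_trans (nrmD _ _) _; rewrite nrmN nrm_half.
have := nrmM (y N + l) (y N - l); have := yN_l N.+1 (leqnSn N).
rewrite /C; lra.
Qed.

Lemma sqrt_one_sub : hermitian_square (1 - u).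
Proof.
have [l y_l] := cs_complete HA sqrt_seq_cauchy.
have l_fix := sqrt_seq_lim_fix y_l.
exists (1 - l); split.
  by rewrite /hermitian starB star1 (nrm_cvg_herm sqrt_seq_herm y_l).
have -> : u = l + l - l * l by rewrite {1 2}l_fix half_twice addrK.
ring.
Qed.

End SquareRoot.

(* Positivity without spectral theory: in a C*-algebra, a >= 0 iff a + d has
   a hermitian square root for every d > 0. *)
Definition positive (a : A) :=
  forall d : R, 0 < d -> hermitian_square (a + d%:C *: 1).

Lemma hermitian_squareZ (t : R) a : 0 <= t ->
  hermitian_square a -> hermitian_square (t%:C *: a).
Proof.
move=> t_ge0 [w [w_herm ww]]; exists ((Num.sqrt t)%:C *: w); split.
  by rewrite /hermitian star_realZ w_herm.
by rewrite -scalerAl -scalerAr scalerA -rmorphM -expr2 sqr_sqrtr // ww.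
Qed.

Lemma nrm_one_sub_sqr_le1 k : hermitian k -> nrm k < 1 -> nrm (1 - k * k) <= 1.
Proof.
move=> k_herm k_lt1.
have kk_herm : hermitian (k * k) by rewrite /hermitian starM k_herm.
have kk_lt1 : nrm (k * k) < 1 by rewrite nrm_sqr_herm // expr_lt1 ?nrm_ge0.
have [g [g_herm gg]] := sqrt_one_sub kk_herm kk_lt1.
by have := nrm_sqr_le_add_sqr g_herm k_herm; rewrite gg subrK nrm1.
Qed.

Lemma nrm_one_sub_mul_star_le1 z : nrm z < 1 -> nrm (1 - z * star z) <= 1.
Proof.
move=> z_lt1.
have zz_herm : hermitian (z * star z) by rewrite /hermitian starM starK mulrC.
have zz_lt1 : nrm (z * star z) < 1 by rewrite nrm_mul_star expr_lt1 ?nrm_ge0.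
have [r [r_herm rr]] := sqrt_one_sub zz_herm zz_lt1.
have [h [k [h_herm k_herm z_hk]]] := cartesian_decomposition z.
have k_lt1 : nrm k < 1 by rewrite (le_lt_trans (nrm_im_le h_herm k_herm)) -?z_hk.
have := nrm_sqr_le_add_sqr r_herm h_herm.
have -> : r * r + h * h = 1 - k * k.
  by rewrite rr z_hk star_cartesian // mul_cartesian_conj; ring.
by rewrite rr; have := nrm_one_sub_sqr_le1 k_herm k_lt1; lra.
Qed.

Lemma positive_mul_star_lt1 z : nrm z < 1 -> positive (z * star z).
Proof.
move=> z_lt1 d d_gt0; set t := 1 + d.
have t_gt0 : 0 < t by rewrite addr_gt0.
set u := t^-1%:C *: (1 - z * star z).
have u_herm : hermitian u.
  by rewrite /hermitian star_realZ starB star1 starM starK mulrC.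
have u_lt1 : nrm u < 1.
  rewrite nrm_realZ ger0_norm ?invr_ge0 ?ltW // mulrC ltr_pdivrMr // mul1r.
  by have := nrm_one_sub_mul_star_le1 z_lt1; rewrite /t; lra.
have -> : z * star z + d%:C *: 1 = t%:C *: (1 - u).
  rewrite /u scalerBr scalerA -rmorphM mulfV ?gt_eqF // rmorph1 scale1r.
  by rewrite /t rmorphD rmorph1 scalerDl scale1r; ring.
exact: hermitian_squareZ (ltW t_gt0) (sqrt_one_sub u_herm u_lt1).
Qed.

Lemma positiveZ (t : R) a : 0 < t -> positive a -> positive (t%:C *: a).
Proof.
move=> t_gt0 a_pos d d_gt0.
have -> : t%:C *: a + d%:C *: 1 = t%:C *: (a + (d / t)%:C *: 1).
  by rewrite scalerDr scalerA -rmorphM mulrC divfK ?gt_eqF.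
exact: hermitian_squareZ (ltW t_gt0) (a_pos _ (divr_gt0 d_gt0 t_gt0)).
Qed.

Lemma positive_mul_star z : positive (z * star z).
Proof.
set s := nrm z + 1.
have s_gt0 : 0 < s by rewrite /s; have := nrm_ge0 z; lra.
set w := s^-1%:C *: z.
have w_lt1 : nrm w < 1.
  rewrite nrm_realZ ger0_norm ?invr_ge0 ?ltW // mulrC ltr_pdivrMr // mul1r.
  by rewrite /s ltrDl ltr01.
have -> : z * star z = (s ^+ 2)%:C *: (w * star w).
  rewrite /w star_realZ -scalerAl -scalerAr !scalerA -!rmorphM.
  by rewrite expr2 mulfK ?mulfV ?gt_eqF // rmorph1 scale1r.
exact: positiveZ (exprn_gt0 2 s_gt0) (positive_mul_star_lt1 w_lt1).
Qed.

Lemma positive0 : positive 0.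
Proof. by have := positive_mul_star 0; rewrite mul0r. Qed.

Lemma positiveD a b : positive a -> positive b -> positive (a + b).
Proof.
move=> a_pos b_pos d d_gt0; have d3_gt0 : 0 < d / 3 by rewrite divr_gt0.
have [r [r_herm rr]] := a_pos _ d3_gt0; have [q [q_herm qq]] := b_pos _ d3_gt0.
have d_split : d%:C = (d / 3)%:C + (d / 3)%:C + (d / 3)%:C.
  by rewrite -!rmorphD; congr _%:C; field.
have -> : a + b + d%:C *: 1
    = a + (d / 3)%:C *: 1 + (b + (d / 3)%:C *: 1) + (d / 3)%:C *: 1.
  by rewrite d_split !scalerDl; ring.
rewrite -rr -qq -mul_cartesian_conj -star_cartesian //.
exact: positive_mul_star _ d3_gt0.
Qed.

Lemma positive_sum (I : Type) (r : seq I) (P : pred I) (F : I -> A) :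
  (forall i, P i -> positive (F i)) -> positive (\sum_(i <- r | P i) F i).
Proof. by move=> F_pos; apply: big_ind => //; [exact: positive0 | exact: positiveD].
Qed.

Lemma nrm_le_addr_positive a b : positive a -> positive b -> nrm a <= nrm (a + b).
Proof.
move=> a_pos b_pos; apply/ler_addgt0Pr => e e_gt0.
have d_gt0 : 0 < e / 3 by rewrite divr_gt0.
set d := e / 3 in d_gt0 *.
have [r [r_herm rr]] := a_pos _ d_gt0; have [q [q_herm qq]] := b_pos _ d_gt0.
have := nrm_sqr_le_add_sqr r_herm q_herm; rewrite rr qq.
have -> : a + d%:C *: 1 + (b + d%:C *: 1) = a + b + (d%:C *: 1 + d%:C *: 1).
  by ring.
have := nrmD (a + b) (d%:C *: 1 + d%:C *: 1).
have := nrmD (d%:C *: 1) (d%:C *: (1 : A)).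
have := nrmB (a + d%:C *: 1) (d%:C *: 1); rewrite addrK !(nrm_real1 (ltW d_gt0)).
by rewrite /d; lra.
Qed.

Lemma cip_conj m (x y : 'rV[A]_m) : star (cip star x y) = cip star y x.
Proof. by rewrite star_sum; apply: eq_bigr => k _; rewrite starM starK mulrC. Qed.

Lemma cipBl m (x x' y : 'rV[A]_m) :
  cip star (x - x') y = cip star x y - cip star x' y.
Proof. by rewrite /cip -sumrB; apply: eq_bigr => k _; rewrite !mxE mulrBl. Qed.

Lemma cipBr m (x y y' : 'rV[A]_m) :
  cip star x (y - y') = cip star x y - cip star x y'.
Proof. by rewrite /cip -sumrB; apply: eq_bigr => k _; rewrite !mxE starB mulrBr. Qed.

Lemma cip_sub_cip m (x x' y y' : 'rV[A]_m) :
  cip star x y - cip star x' y' = cip star (x - x') y + cip star x' (y - y').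
Proof. by rewrite cipBl cipBr addrA subrK. Qed.

Lemma parseval_sum_mul_star d n (tau : 'I_n -> 'rV[A]_d) x :
  parseval star tau ->
  \sum_(j < n) cip star x (tau j) * star (cip star x (tau j)) = cip star x x.
Proof. by move=> /(_ x) ->; apply: eq_bigr => j _; rewrite cip_conj. Qed.

Lemma nrm_sum_add_mul_star_le (I : finType) (y z : I -> A) :
  nrm (\sum_i (y i + z i) * star (y i + z i))
    <= 2 * nrm (\sum_i y i * star (y i) + \sum_i z i * star (z i)).
Proof.
set S := \sum_i y i * star (y i) + \sum_i z i * star (z i).
have parallelogram : \sum_i (y i + z i) * star (y i + z i)
    + \sum_i (y i - z i) * star (y i - z i) = S + S.
  by rewrite /S -!big_split /=; apply: eq_bigr => i _; rewrite starD starB; ring.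
have sum_pos (c : I -> A) : positive (\sum_i c i * star (c i)).
  by apply: positive_sum => i _; apply: positive_mul_star.
apply: le_trans (nrm_le_addr_positive (sum_pos _) (sum_pos (fun i => y i - z i))) _.
by rewrite parallelogram; have := nrmD S S; lra.
Qed.

End CStarAlgebra.


Theorem mainTheorem1 (R : realType) (A : comAlgType R[i])
    (star : A -> A) (nrm : A -> R) (HA : is_comm_cstar star nrm)
    (d n : nat) (tau omega : 'I_n -> 'rV[A]_d)
    (Htau : parseval star tau) (Homega : parseval star omega)
    (eps : R) (Heps : 0 < eps) :
  nrm (\sum_(j < n) cip star (tau j - omega j) (tau j - omega j)) < eps ->
  nrm (\sum_(j < n)
         cip star (analysis_op star tau (tau j) - analysis_op star omega (omega j))
                  (analysis_op star tau (tau j) - analysis_op star omega (omega j)))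
    < 4 * eps.
Proof.
set H := \sum_(j < n) _ => H_lt.
pose y p := cip star (tau p.1 - omega p.1) (tau p.2).
pose z p := cip star (omega p.1) (tau p.2 - omega p.2).
have sum_y : \sum_p y p * star (y p) = H.
  rewrite -(pair_bigA _ (fun j k => y (j, k) * star (y (j, k)))).
  by apply: eq_bigr => j _; rewrite /y /= (parseval_sum_mul_star HA _ Htau).
have sum_z : \sum_p z p * star (z p) = H.
  rewrite -(pair_bigA _ (fun j k => z (j, k) * star (z (j, k)))) exchange_big /=.
  apply: eq_bigr => k _.
  rewrite -(parseval_sum_mul_star HA _ Homega); apply: eq_bigr => j _.
  by rewrite /z -[cip star (omega j) _](cip_conj HA) (starK HA) mulrC.
rewrite /cip pair_bigA /=.
rewrite (eq_bigr (fun p => (y p + z p) * star (y p + z p))); last first.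
  by move=> p _; rewrite !mxE (cip_sub_cip HA).
apply: le_lt_trans (nrm_sum_add_mul_star_le HA y z) _.
by rewrite sum_y sum_z; have := nrmD HA H H; lra.
Qed.
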